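(* Let $k$ be an algebraically closed field, $\mathbf{A}=\mathbf{A}_{\sigma'}$ an affine toric variety, $\mathbf{P}=\mathbf{P}_{\Sigma}$ a simplicial toric variety such that $m(\Sigma)$ is prime to the characteristic of $k$, and $\pi:\mathbf{P}\to\mathbf{A}$ an equivariant morphism. For integers $0\le r\le p$, the kernel of the wedge product homomorphism $$\omega^{r}_{\mathbf{P}/\mathbf{A}}(\log D)\otimes_{\mathcal{O}_{\mathbf{P}}}\widetilde{\omega}^{p-r}_{\mathbf{P}/\mathbf{A}}\to\omega^{p}_{\mathbf{P}/\mathbf{A}}(\log D),\quad\eta\otimes w\mapsto\eta\wedge w,$$ is contained in the kernel of $\Phi$.
   Context: $N$ free of finite rank with dual $M$, $\Sigma$ a finite fan in $N_{\mathbf{R}}$, $v_{\rho}$ primitive generator of $\rho\in\Sigma(1)$, $\chi^{u}$ characters. $\pi$ is induced by $\pi_{*}:N\to N'$ ($N'$ free, dual $M'$, $\pi^{*}$ dual) with $|\Sigma|\subset\pi_{*\mathbf{R}}^{-1}(\sigma')$. $m(\sigma)$ is the order of $(N\cap\sigma_{\mathbf{R}})/\sum_{\rho\in\sigma(1)}\mathbf{Z}v_{\rho}$, $m(\Sigma)=\prod_{\sigma}m(\sigma)$. $\Sigma_{\pi}(r)=\{\tau\in\Sigma(r)\mid\tau\subset\pi_{*\mathbf{R}}^{-1}(0)\}$, $D=\sum_{\rho\in\Sigma_{\pi}(1)}\mathbf{P}_{\rho}$. For $\tau\in\Sigma(r)$, $\mathbf{P}_{\tau}$ is the torus-invariant closed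 subvariety (toric variety of the quotient fan in $N/(N\cap\tau_{\mathbf{R}})$, dual lattice $M\cap\tau^{\perp}$), $\iota_{\tau}$ the closed immersion ($\chi^{u}\mapsto\chi^{u}_{\tau}$ if $u\in\tau^{\perp}$, else $0$); for $\tau\in\Sigma_{\pi}(r)$, $\pi\circ\iota_{\tau}$ is equivariant and $\widetilde{\omega}_{\mathbf{P}_{\tau}/\mathbf{A}}$ is defined for it as below. $M_{\pi,k}=\operatorname{coker}(k\otimes M'\to k\otimes M)$, pairing with $1\otimes v$ for $v\in\ker\pi_{*}$. With $j:\mathbf{P}^{\mathrm{reg}}\to\mathbf{P}$ the nonsingular locus: for a nonsingular $\sigma$ with $\mathbf{Z}$-basis $v_{1},\dots,v_{d}$ of $N$, $\sigma=\sum_{i\le c}\mathbf{R}_{\ge0}v_{i}$, $v_{1..l}\in\ker\pi_{*}$, $v_{l+1..c}\notin\ker\pi_{*}$, dual basis $u_{i}$, $x_{i}=\chi^{u_{i}}$, $\omega^{1}_{\mathbf{P}^{\mathrm{reg}}}$ is free on $dx_{1},\dots,dx_{l},dx_{l+1}/x_{l+1},\dots,dx_{d}/x_{d}$ inside $\mathcal{O}\otimes M$; $\omega^{1}_{\mathbf{P}^{\mathrm{reg}}/\mathbf{A}}=\operatorname{coker}(\mathcal{O}\otimes M'\to\omega^{1}_{\mathbf{P}^{\mathrm{reg}}})$, $\widetilde{\omega}^{p}_{\mathbf{P}/\mathbf{A}}=j_{*}\bigwedge^{p}\omega^{1}_{\mathbf{P}^{\mathrm{reg}}/\mathbf{A}}$,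 $\omega^{p}_{\mathbf{P}/\mathbf{A}}(\log D)=\mathcal{O}_{\mathbf{P}}\otimes_{k}\bigwedge^{p}M_{\pi,k}$. Concretely $\Gamma(\mathbf{A}_{\sigma},\widetilde{\omega}^{p}_{\mathbf{P}/\mathbf{A}})=\bigoplus_{u\in M\cap\sigma^{\vee}}\bigwedge^{p}H_{\sigma,u}\chi^{u}$ with $H_{\sigma,u}=\{w\in M_{\pi,k}\mid\langle w,1\otimes v_{\rho}\rangle=0$ for $\rho\in\Sigma_{\pi}(1)$, $\rho\subset\sigma$, $\langle u,v_{\rho}\rangle=0\}$. The map $\Phi$: for $\tau\in\Sigma_{\pi}(r)$ with ordered ray generators $v_{1},\dots,v_{r}$, let $\phi_{\tau}:\bigwedge^{r}M_{\pi,k}\to k$, $\eta_{1}\wedge\dots\wedge\eta_{r}\mapsto\det(\langle\eta_{i},1\otimes v_{j}\rangle)$. For $\sigma\supset\tau$, $\Phi_{\sigma,\tau}:\bigwedge^{r}M_{\pi,k}\otimes\bigoplus_{u\in M\cap\sigma^{\vee}}\bigwedge^{p-r}H_{\sigma,u}\chi^{u}\to\bigoplus_{u\in M\cap\sigma^{\vee}\cap\tau^{\perp}}\bigwedge^{p-r}H_{\sigma,u}\chi^{u}_{\tau}$ sends $\eta\otimes w\chi^{u}$ to $\phi_{\tau}(\eta)w\chi^{u}_{\tau}$ if $u\in\tau^{\perp}$ and to $0$ otherwise; identifying (as $m(\Sigma)$ is prime to $\operatorname{char}k$) $H_{\sigma,u}$ for $u\in\tau^{\perp}$ with the corresponding subspace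 of $(M\cap\tau^{\perp})_{\pi_{\tau},k}$, these give sheaf maps $\Phi_{\tau}:\omega^{r}_{\mathbf{P}/\mathbf{A}}(\log D)\otimes\widetilde{\omega}^{p-r}_{\mathbf{P}/\mathbf{A}}\to\iota_{\tau*}\widetilde{\omega}^{p-r}_{\mathbf{P}_{\tau}/\mathbf{A}}$, and $\Phi=\bigoplus_{\tau\in\Sigma_{\pi}(r)}\Phi_{\tau}$. *)

(* Chart-level (affine open A_sigma, degree u) rendering of
   Lemma 3.3. *)
From Stdlib Require List.
From HB Require Import structures.
From mathcomp Require Import all_boot all_order all_algebra.
Set Implicit Arguments. Unset Strict Implicit. Unset Printing Implicit Defensive.
Import Order.TTheory GRing.Theory Num.Theory.
Local Open Scope ring_scope.

(* ---------- lattices: N = M = Z^d (row vectors), pairing = dot product ---- *)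
Definition dotZ (d : nat) (u v : 'rV[int]_d) : int := \sum_i u 0 i * v 0 i.
Definition ratv (d : nat) (v : 'rV[int]_d) : 'rV[rat]_d := map_mx (fun z : int => z%:~R) v.

Definition in_cone (I : finType) (d : nat) (g : I -> 'rV[int]_d) (T : pred I)
    (x : 'rV[rat]_d) : Prop :=
  exists a : I -> rat, (forall i, 0 <= a i) /\ x = \sum_(i | T i) a i *: ratv (g i).

Definition lin_indep (I : finType) (d : nat) (g : I -> 'rV[int]_d) (T : pred I) : Prop :=
  forall a : I -> rat, \sum_(i | T i) a i *: ratv (g i) = 0 -> forall i, T i -> a i = 0.

Definition primitive (d : nat) (v : 'rV[int]_d) : Prop :=
  v != 0 /\ forall (c : int) (x : 'rV[int]_d), v = c *: x -> c = 1 \/ c = -1.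

(* A finite simplicial fan: rays indexed by 'I_n (primitive generators v_rho),
   cones = sets of ray indices. *)
Definition simplicial_fan (d n : nat) (rays : 'I_n -> 'rV[int]_d)
    (Sig : {set {set 'I_n}}) : Prop :=
  [/\ injective rays, (forall i, primitive (rays i)),
      (forall i, [set i] \in Sig),
      (forall S, S \in Sig -> lin_indep rays (mem S)) &
      ((forall S T : {set 'I_n}, S \in Sig -> T \subset S -> T \in Sig) /\
       (forall (S T : {set 'I_n}) x, S \in Sig -> T \in Sig ->
          in_cone rays (mem S) x -> in_cone rays (mem T) x ->
          in_cone rays (mem (S :&: T)) x))].

Definition strongly_convex (I : finType) (d : nat) (g : I -> 'rV[int]_d) : Prop :=
  forall x, in_cone g predT x -> in_cone g predT (- x) -> x = 0.

Definition in_span (d n : nat) (rays : 'I_n -> 'rV[int]_d) (S : {set 'I_n})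
    (x : 'rV[int]_d) : Prop :=
  exists a : 'I_n -> rat, ratv x = \sum_(i in S) a i *: ratv (rays i).
Definition congr_mod (d n : nat) (rays : 'I_n -> 'rV[int]_d) (S : {set 'I_n})
    (x y : 'rV[int]_d) : Prop :=
  exists a : 'I_n -> int, x - y = \sum_(i in S) a i *: rays i.

(* m = order of (N cap sigma_R) / sum_{rho in sigma(1)} Z v_rho *)
Definition is_index (d n : nat) (rays : 'I_n -> 'rV[int]_d) (S : {set 'I_n})
    (m : nat) : Prop :=
  exists reps : 'I_m -> 'rV[int]_d,
    [/\ (forall j, in_span rays S (reps j)),
        (forall j j', congr_mod rays S (reps j) (reps j') -> j = j') &
        (forall x, in_span rays S x -> exists j, congr_mod rays S x (reps j))].

Definition mSigma_prime_to_char (k : fieldType) (d n : nat)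
    (rays : 'I_n -> 'rV[int]_d) (Sig : {set {set 'I_n}}) : Prop :=
  exists mf : {set 'I_n} -> nat,
    (forall S, S \in Sig -> is_index rays S (mf S)) /\
    (forall p, p \in [pchar k] -> coprime p (\prod_(S in Sig) mf S)).

(* ---------- M_{pi,k} = coker (k (x) M' -> k (x) M), elements represented in k^d ---- *)
Definition pairk (k : fieldType) (d : nat) (w : 'rV[k]_d) (v : 'rV[int]_d) : k :=
  \sum_i w 0 i * (v 0 i)%:~R.

(* image of 1 (x) pi^* : k^{d'} -> k^d ; pi_* is v |-> v *m P *)
Definition imPi (k : fieldType) (d d' : nat) (P : 'M[int]_(d, d')) (w : 'rV[k]_d) : Prop :=
  exists u' : 'rV[k]_d', w = u' *m (map_mx (fun z : int => z%:~R) P)^T.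

(* H_{sigma,u} (as a set of representatives in k^d, it contains imPi) *)
Definition Hspace (k : fieldType) (d d' n : nat) (rays : 'I_n -> 'rV[int]_d)
    (P : 'M[int]_(d, d')) (S : {set 'I_n}) (u : 'rV[int]_d) (w : 'rV[k]_d) : Prop :=
  forall i, i \in S -> rays i *m P = 0 -> dotZ u (rays i) = 0 -> pairk w (rays i) = 0.

(* ---------- exterior powers via their universal property ----------------
   An alternating q-linear form on the space A / I0 (A a subspace of k^d
   containing I0): multilinear and alternating on A, vanishing if an argument
   lies in I0. *)
Definition upd (k : fieldType) (d q : nat) (x : 'I_q -> 'rV[k]_d) (i : 'I_q)
    (y : 'rV[k]_d) : 'I_q -> 'rV[k]_d := fun j => if j == i then y else x j.

Definition altform (k : fieldType) (d q : nat) (A I0 : 'rV[k]_d -> Prop)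
    (f : ('I_q -> 'rV[k]_d) -> k) : Prop :=
  [/\ (forall x i (a : k) y z, (forall j, j != i -> A (x j)) -> A y -> A z ->
          f (upd x i (a *: y + z)) = a * f (upd x i y) + f (upd x i z)),
      (forall x i j, i != j -> x i = x j -> (forall l, A (x l)) -> f x = 0) &
      (forall x i, (forall l, A (x l)) -> I0 (x i) -> f x = 0)].

(* a formal sum  sum c * x_1 /\ ... /\ x_q  is zero in  Lambda^q (A / I0) *)
Definition ext_zero (k : fieldType) (d q : nat) (A I0 : 'rV[k]_d -> Prop)
    (s : seq (k * ('I_q -> 'rV[k]_d))) : Prop :=
  forall f, altform A I0 f -> \sum_(x <- s) x.1 * f x.2 = 0.

(* element  sum c * (eta_1/\../\eta_r) (x) (w_1/\../\w_q)  of
   Lambda^r M_{pi,k} (x) Lambda^q H_{sigma,u}, given as a formal sum *)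
Definition tens (k : fieldType) (d r q : nat) :=
  seq (k * (('I_r -> 'rV[k]_d) * ('I_q -> 'rV[k]_d))).

Definition concat_tuple (k : fieldType) (d r q : nat) (eta : 'I_r -> 'rV[k]_d)
    (w : 'I_q -> 'rV[k]_d) : 'I_(r + q) -> 'rV[k]_d :=
  fun i => match split i with inl a => eta a | inr b => w b end.

Definition wedge (k : fieldType) (d r q : nat) (s : tens k d r q)
    : seq (k * ('I_(r + q) -> 'rV[k]_d)) :=
  map (fun x => (x.1, concat_tuple x.2.1 x.2.2)) s.

Definition phi_tau (k : fieldType) (d n r : nat) (rays : 'I_n -> 'rV[int]_d)
    (t : 'I_r -> 'I_n) (eta : 'I_r -> 'rV[k]_d) : k :=
  \det (\matrix_(i, j) pairk (eta i) (rays (t j))).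

Definition Phi (k : fieldType) (d n r q : nat) (rays : 'I_n -> 'rV[int]_d)
    (t : 'I_r -> 'I_n) (u : 'rV[int]_d) (s : tens k d r q)
    : seq (k * ('I_q -> 'rV[k]_d)) :=
  map (fun x => ((if [forall j, dotZ u (rays (t j)) == 0]
                  then phi_tau rays t x.2.1 else 0) * x.1, x.2.2)) s.

(* Test vanishing in [Lambda^q (H_{sigma,u} / im pi^* )] against an alternating
   q-form [f]. Extend [f] to [k^d] through a linear retraction [p] onto
   [H_{sigma,u}], and let [l_j = <_, v_(t j)>]. Since the [v_(t j)] lie in
   [ker pi_*], the (r+q)-form [F = l_1 /\ ... /\ l_r /\ (f o p)] is alternating
   on [k^d / im pi^*]. When [u] lies in [tau^perp] the [l_j] vanish on
   [H_{sigma,u}], so Laplace expansion along the [l_j] gives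
   [F (eta /\ w) = phi_tau eta * f w]; otherwise [Phi] is zero. Hence [F]
   evaluated on an element of the kernel of the wedge product is [f] evaluated
   on its image under [Phi]. *)

From Stdlib Require Import FunctionalExtensionality.
From Stdlib Require List.
From HB Require Import structures.
From mathcomp Require Import all_boot all_order all_algebra.
From mathcomp Require Import ring zify.
Set Implicit Arguments. Unset Strict Implicit. Unset Printing Implicit Defensive.
Import Order.TTheory GRing.Theory Num.Theory.
Local Open Scope ring_scope.

Lemma bumpE_ge i n : (i <= n)%N -> bump i n = n.+1.
Proof. by rewrite /bump; lia. Qed.

Lemma bumpE_lt i n : (n < i)%N -> bump i n = n.
Proof. by rewrite /bump; lia. Qed.

Section NatAltForms.
Variables (k : fieldType) (V : lmodType k) (I0 : V -> Prop).

Definition updn (x : nat -> V) (j : nat) (y : V) : nat -> V :=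
  fun n => if n == j then y else x n.

(* Arguments are indexed by [nat] so that deleting one is precomposition with
   [bump]. Only repetitions of adjacent arguments are required to vanish; the
   general case is recovered in [nat_altform_eq0]. *)
Definition nat_altform (m : nat) (G : (nat -> V) -> k) : Prop :=
  [/\ (forall x j (a : k) y z, (j < m)%N ->
         G (updn x j (a *: y + z)) = a * G (updn x j y) + G (updn x j z)),
      (forall x j, (j.+1 < m)%N -> x j = x j.+1 -> G x = 0) &
      (forall x j, (j < m)%N -> I0 (x j) -> G x = 0)].

Lemma updnC x i j a b : i != j ->
  updn (updn x i a) j b = updn (updn x j b) i a.
Proof.
move=> nij; apply: functional_extensionality => n; rewrite /updn.
by case: (eqVneq n i) => [->|//]; rewrite (negbTE nij).
Qed.

Lemma updn_id x j : updn x j (x j) = x.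
Proof. by apply: functional_extensionality => n; rewrite /updn; case: eqP => [->|]. Qed.

Definition swapn (x : nat -> V) (j : nat) : nat -> V :=
  updn (updn x j (x j.+1)) j.+1 (x j).

Lemma nat_altform_swap m G x j : nat_altform m G -> (j.+1 < m)%N ->
  G x + G (swapn x j) = 0.
Proof.
case=> linG adjG _ jm.
(* Polarize: [B] is bilinear and vanishes on the diagonal. *)
have nj : j != j.+1 by rewrite neq_ltn ltnSn.
pose B a b := G (updn (updn x j a) j.+1 b).
have BDr a b1 b2 : B a (b1 + b2) = B a b1 + B a b2.
  by have := linG (updn x j a) j.+1 1 b1 b2 jm; rewrite scale1r mul1r.
have BDl a1 a2 b : B (a1 + a2) b = B a1 b + B a2 b.
  rewrite /B !(updnC _ _ _ nj).
  by have := linG (updn x j.+1 b) j 1 a1 a2 (ltnW jm); rewrite scale1r mul1r.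
have Bdiag a : B a a = 0.
  by apply: (adjG _ j jm); rewrite /updn eqxx (negbTE nj) eqxx.
have Bx : B (x j) (x j.+1) = G x by rewrite /B updn_id updn_id.
have := Bdiag (x j + x j.+1); rewrite BDr !BDl !Bdiag add0r addr0 Bx.
by rewrite addrC.
Qed.

Lemma nat_altform_eq0 m G x i j : nat_altform m G ->
  (i < j)%N -> (j < m)%N -> x i = x j -> G x = 0.
Proof.
(* Bring the repeated argument next to its twin by adjacent swaps. *)
move=> altG /subnKC <-; move: (j - i.+1)%N => e {j}.
elim: e x => [|e IHe] x; first by rewrite addn0; case: altG => _ adjG _; apply: adjG.
rewrite addnS => em xie.
have := nat_altform_swap x altG em.
suff ->: G (swapn x (i.+1 + e)) = 0 by rewrite addr0.
apply: IHe; first exact: ltnW.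
have ne1 : (i == i.+1 + e)%N = false by apply/eqP; lia.
have ne2 : (i == (i.+1 + e).+1)%N = false by apply/eqP; lia.
by rewrite /swapn /updn ne1 ne2 eqxx (ltn_eqF (ltnSn _)).
Qed.

Lemma updn_bump x i j y : i != j ->
  (fun n => updn x j y (bump i n)) = updn (fun n => x (bump i n)) (unbump i j) y.
Proof.
move=> nij; apply: functional_extensionality => n; rewrite /updn.
suff -> : (bump i n == j) = (n == unbump i j) by [].
apply/eqP/eqP => [<-|->]; first by rewrite bumpK.
by rewrite unbumpK // inE eq_sym.
Qed.

Definition wedge_lform (l : V -> k) (G : (nat -> V) -> k) (m : nat) (x : nat -> V) : k :=
  \sum_(0 <= i < m.+1) (-1) ^+ i * l (x i) * G (fun n => x (bump i n)).

Section WedgeLform.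
Variables (l : V -> k) (G : (nat -> V) -> k) (m : nat).
Hypothesis l_linear : forall a y z, l (a *: y + z) = a * l y + l z.
Hypothesis l_I0 : forall v, I0 v -> l v = 0.
Hypothesis G_alt : nat_altform m G.

Lemma wedge_lform_linear x j a y z : (j < m.+1)%N ->
  wedge_lform l G m (updn x j (a *: y + z)) =
  a * wedge_lform l G m (updn x j y) + wedge_lform l G m (updn x j z).
Proof.
have [linG _ _] := G_alt; move=> jm.
rewrite /wedge_lform big_distrr -big_split /=; apply: eq_big_nat => i /andP[_ im].
have [->|nij] := eqVneq i j.
  have skip_j w : (fun n => updn x j w (bump j n)) = (fun n => x (bump j n)).
    apply: functional_extensionality => n; rewrite /updn.
    by rewrite eq_sym (negbTE (neq_bump j n)).
  rewrite !skip_j /updn eqxx l_linear; ring.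
rewrite !updn_bump // {1 3 5}/updn (negbTE nij) linG; last by rewrite /unbump; lia.
ring.
Qed.

Lemma wedge_lform_adj0 x j : (j.+1 < m.+1)%N -> x j = x j.+1 ->
  wedge_lform l G m x = 0.
Proof.
(* Terms keeping both [x j] and [x j.+1] vanish; the two others cancel. *)
have [_ adjG _] := G_alt; move=> jm xj.
rewrite /wedge_lform (big_cat_nat _ (n := j)) //=; last by lia.
rewrite (@big_ltn _ _ _ j) ?(@big_ltn _ _ _ j.+1) //; last by lia.
rewrite big_nat big1 => [|i /andP[_ ij]]; last first.
  rewrite (adjG _ j.-1) ?mulr0 //; first by lia.
  by rewrite !bumpE_ge ?prednK //; lia.
rewrite [X in _ + (_ + (_ + X))]big_nat big1 => [|i /andP[ji im]]; last first.
  rewrite (adjG _ j) ?mulr0 //; first by lia.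
  by rewrite !bumpE_lt //; lia.
have -> : (fun n => x (bump j.+1 n)) = (fun n => x (bump j n)).
  apply: functional_extensionality => n.
  case: (ltngtP n j) => h; first by rewrite !bumpE_lt //; lia.
    by rewrite !bumpE_ge //; lia.
  by rewrite h bumpE_lt // bumpE_ge.
rewrite -xj exprS; ring.
Qed.

Lemma wedge_lform_I0 x j : (j < m.+1)%N -> I0 (x j) -> wedge_lform l G m x = 0.
Proof.
have [_ _ I0G] := G_alt; move=> jm xj.
rewrite /wedge_lform big_nat big1 // => i /andP[_ im].
have [->|nij] := eqVneq i j; first by rewrite l_I0 // mulr0 mul0r.
rewrite (I0G _ (unbump i j)) ?mulr0 //; first by rewrite /unbump; lia.
by rewrite unbumpK // inE eq_sym.
Qed.

Lemma nat_altform_wedge_lform : nat_altform m.+1 (wedge_lform l G m).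
Proof.
split; [exact: wedge_lform_linear | exact: wedge_lform_adj0 | exact: wedge_lform_I0].
Qed.

End WedgeLform.

Fixpoint wedge_lforms (q : nat) (ls : nat -> V -> k) (r : nat)
    (G : (nat -> V) -> k) : (nat -> V) -> k :=
  if r is r'.+1 then wedge_lform (ls 0%N) (wedge_lforms q (fun n => ls n.+1) r' G) (r' + q)
  else G.

Lemma nat_altform_wedge_lforms q ls r G :
  (forall i a y z, ls i (a *: y + z) = a * ls i y + ls i z) ->
  (forall i v, I0 v -> ls i v = 0) ->
  nat_altform q G -> nat_altform (r + q) (wedge_lforms q ls r G).
Proof.
elim: r ls => [//|r IHr] ls ls_linear ls_I0 G_alt /=.
apply: nat_altform_wedge_lform; [exact: ls_linear | exact: ls_I0 |].
apply: IHr => [i|i|//]; [exact: ls_linear | exact: ls_I0].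
Qed.

(* Laplace expansion along the first row. *)
Lemma wedge_lforms_det q ls r G x :
  (forall i j, (i < r)%N -> (r <= j < r + q)%N -> ls i (x j) = 0) ->
  wedge_lforms q ls r G x =
  \det (\matrix_(i < r, j < r) ls i (x j)) * G (fun j => x (r + j)%N).
Proof.
elim: r ls x => [|r IHr] ls x lsx0 /=; first by rewrite det_mx00 mul1r.
rewrite /wedge_lform (big_cat_nat _ (n := r.+1)) //=; last by lia.
rewrite [X in _ + X]big_nat [X in _ + X]big1 ?addr0; last first.
  by move=> i /andP[ri iq]; rewrite lsx0 ?mulr0 ?mul0r //; lia.
rewrite (expand_det_row _ ord0) mulr_suml big_mkord; apply: eq_bigr => i _.
rewrite IHr => [|i' j i'r /andP[rj jq]]; last first.
  by rewrite bumpE_ge; [apply: lsx0; lia | have := ltn_ord i; lia].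
have -> : (fun j => x (bump i (r + j))) = (fun j => x (r.+1 + j)%N).
  by apply: functional_extensionality => j; rewrite bumpE_ge //; have := ltn_ord i; lia.
rewrite /cofactor !mxE add0n.
have -> : row' ord0 (col' i (\matrix_(i < r.+1, j < r.+1) ls i (x j))) =
    \matrix_(i' < r, j < r) ls i'.+1 (x (bump i j)).
  by apply/matrixP => i' j; rewrite !mxE.
ring.
Qed.

End NatAltForms.

Section RowTuples.
Variables (k : fieldType) (d : nat).
Local Notation V := 'rV[k]_d.

Definition ext_nat (N : nat) (x : 'I_N -> V) (i : nat) : V := oapp x 0 (insub i).

Lemma ext_nat_ord N (x : 'I_N -> V) (i : 'I_N) : ext_nat x i = x i.
Proof. by rewrite /ext_nat valK. Qed.

Lemma ext_nat_upd N (x : 'I_N -> V) i y : ext_nat (upd x i y) = updn (ext_nat x) i y.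
Proof.
apply: functional_extensionality => m; rewrite /ext_nat /upd /updn.
case: insubP => [j _ <-|mN] /=; first by rewrite val_eqE.
suff /negbTE -> : m != i by [].
by apply: contraNneq mN => ->.
Qed.

Lemma ext_nat_concat_l r q (eta : 'I_r -> V) (w : 'I_q -> V) (i : 'I_r) :
  ext_nat (concat_tuple eta w) i = eta i.
Proof.
rewrite -[nat_of_ord i]/(nat_of_ord (lshift q i)) ext_nat_ord /concat_tuple.
by rewrite (unsplitK (inl i)).
Qed.

Lemma ext_nat_concat_r r q (eta : 'I_r -> V) (w : 'I_q -> V) (j : 'I_q) :
  ext_nat (concat_tuple eta w) (r + j)%N = w j.
Proof.
rewrite -[(r + j)%N]/(nat_of_ord (rshift r j)) ext_nat_ord /concat_tuple.
by rewrite (unsplitK (inr j)).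
Qed.

Lemma pairk_linear (a : k) (y z : V) v :
  pairk (a *: y + z) v = a * pairk y v + pairk z v.
Proof.
rewrite /pairk big_distrr -big_split /=; apply: eq_bigr => i _; rewrite !mxE; ring.
Qed.

Lemma pairk_imPi d' (P : 'M[int]_(d, d')) (w : V) v :
  v *m P = 0 -> imPi P w -> pairk w v = 0.
Proof.
move=> vP [u' ->]; rewrite /pairk.
under eq_bigr do rewrite !mxE mulr_suml.
rewrite exchange_big /= big1 // => b _.
have : (v *m P) 0 b = 0 by rewrite vP mxE.
rewrite !mxE => vPb.
transitivity (u' 0 b * (\sum_j v 0 j * P j b)%:~R); last by rewrite vPb mulr0.
rewrite rmorph_sum big_distrr; apply: eq_bigr => i _.
by rewrite !mxE /= rmorphM; ring.
Qed.

End RowTuples.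

Section HspaceProjection.
Variables (k : fieldType) (d d' n : nat) (rays : 'I_n -> 'rV[int]_d).
Variables (P : 'M[int]_(d, d')) (S : {set 'I_n}) (u : 'rV[int]_d).

Definition Hspace_ray (i : 'I_n) : bool :=
  [&& i \in S, rays i *m P == 0 & dotZ u (rays i) == 0].

Definition Hspace_mx : 'M[k]_(d, n) :=
  \matrix_(a, i) if Hspace_ray i then (rays i 0 a)%:~R else 0.

Lemma Hspace_mxP (w : 'rV[k]_d) : Hspace rays P S u w <-> w *m Hspace_mx = 0.
Proof.
have pairk_mx i : (w *m Hspace_mx) 0 i = if Hspace_ray i then pairk w (rays i) else 0.
  rewrite !mxE; case: ifP => Hi; first by apply: eq_bigr => a _; rewrite mxE Hi.
  by rewrite big1 // => a _; rewrite mxE Hi mulr0.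
split=> [Hw | Hw0 i iS iP iu].
  apply/rowP => i; rewrite pairk_mx mxE; case: ifP => // /and3P[iS /eqP iP /eqP iu].
  exact: Hw.
have Hi : Hspace_ray i by rewrite /Hspace_ray iS iP iu !eqxx.
by have := pairk_mx i; rewrite Hw0 Hi mxE.
Qed.

(* Any linear retraction of k^d onto H_{sigma,u} would do. *)
Definition projH (v : 'rV[k]_d) : 'rV[k]_d :=
  v *m proj_mx (kermx Hspace_mx) (kermx Hspace_mx)^C%MS.

Lemma projH_Hspace v : Hspace rays P S u (projH v).
Proof. by apply/Hspace_mxP/eqP; rewrite -sub_kermx proj_mx_sub. Qed.

Lemma projH_id w : Hspace rays P S u w -> projH w = w.
Proof.
move=> /Hspace_mxP Hw; apply: proj_mx_id; first exact: capmx_compl.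
by rewrite sub_kermx Hw.
Qed.

Lemma projH_linear a y z : projH (a *: y + z) = a *: projH y + projH z.
Proof. by rewrite /projH mulmxDl scalemxAl. Qed.

Lemma imPi_Hspace (w : 'rV[k]_d) : imPi P w -> Hspace rays P S u w.
Proof. by move=> Pw i _ iP _; exact: pairk_imPi iP Pw. Qed.

End HspaceProjection.

Section PhiForm.
Variables (k : fieldType) (d d' n r q : nat) (rays : 'I_n -> 'rV[int]_d).
Variables (P : 'M[int]_(d, d')) (S : {set 'I_n}) (u : 'rV[int]_d) (t : 'I_r -> 'I_n).
Hypothesis tP : forall j, rays (t j) *m P = 0.
Variable f : ('I_q -> 'rV[k]_d) -> k.
Hypothesis f_alt : altform (Hspace rays P S u) (imPi P) f.

Local Notation V := 'rV[k]_d.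
Local Notation projH := (@projH k d d' n rays P S u).

Definition tau_lform (i : nat) (w : V) : k :=
  oapp (fun j : 'I_r => pairk w (rays (t j))) 0 (insub i).

Definition fproj (x : nat -> V) : k := f (fun j : 'I_q => projH (x j)).

Definition Phi_form (x : 'I_(r + q) -> V) : k :=
  wedge_lforms q tau_lform r fproj (ext_nat x).

Lemma tau_lform_linear i a y z :
  tau_lform i (a *: y + z) = a * tau_lform i y + tau_lform i z.
Proof.
by rewrite /tau_lform; case: insub => [j|] /=; rewrite ?pairk_linear ?mulr0 ?addr0.
Qed.

Lemma tau_lform_imPi i w : imPi P w -> tau_lform i w = 0.
Proof. by rewrite /tau_lform; case: insub => [j|] //= /(pairk_imPi (tP j)). Qed.

Lemma projH_updn x j y (jq : (j < q)%N) :
  (fun i : 'I_q => projH (updn x j y i)) =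
  upd (fun i : 'I_q => projH (x i)) (Ordinal jq) (projH y).
Proof.
apply: functional_extensionality => i; rewrite /upd /updn -val_eqE /=.
by case: eqP.
Qed.

Lemma fproj_altform : nat_altform (imPi P) q fproj.
Proof.
have [linf altf I0f] := f_alt.
split=> [x j a y z jq | x j jq xj | x j jq xj]; rewrite /fproj.
- by rewrite !projH_updn projH_linear linf // => *; apply: projH_Hspace.
- apply: (altf _ (Ordinal (ltnW jq)) (Ordinal jq)).
  + by rewrite -val_eqE /= neq_ltn ltnSn.
  + by rewrite /= xj.
  + by move=> i; apply: projH_Hspace.
- apply: (I0f _ (Ordinal jq)); first by move=> i; apply: projH_Hspace.
  by rewrite /= projH_id //; apply: imPi_Hspace.
Qed.

Lemma Phi_form_altform : altform (fun _ => True) (imPi P) Phi_form.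
Proof.
have Phi_alt := nat_altform_wedge_lforms r tau_lform_linear tau_lform_imPi fproj_altform.
have [linF _ I0F] := Phi_alt.
split=> [x i a y z _ _ _ | x i j nij xij _ | x i _ xi].
- by rewrite /Phi_form !ext_nat_upd linF.
- have exij : ext_nat x i = ext_nat x j by rewrite !ext_nat_ord.
  case: (ltngtP i j) => [ij|ji|/val_inj eij]; last by rewrite eij eqxx in nij.
    exact: nat_altform_eq0 Phi_alt ij (ltn_ord j) exij.
  exact: nat_altform_eq0 Phi_alt ji (ltn_ord i) (esym exij).
- by rewrite /Phi_form (I0F _ i) // ext_nat_ord.
Qed.

Lemma Phi_form_concat (eta : 'I_r -> V) (w : 'I_q -> V) :
  (forall j, t j \in S) -> (forall j, dotZ u (rays (t j)) = 0) ->
  (forall j, Hspace rays P S u (w j)) ->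
  Phi_form (concat_tuple eta w) = phi_tau rays t eta * f w.
Proof.
move=> tS tu Hw; rewrite /Phi_form wedge_lforms_det; last first.
  move=> i j ir /andP[rj jrq]; rewrite -(subnKC rj).
  have jq : (j - r < q)%N by rewrite ltn_subLR.
  rewrite -[(j - r)%N]/(nat_of_ord (Ordinal jq)) ext_nat_concat_r.
  by rewrite /tau_lform insubT /=; apply: Hw.
rewrite /phi_tau -det_tr; congr (\det _ * _).
  by apply/matrixP => i j; rewrite !mxE ext_nat_concat_l /tau_lform valK.
rewrite /fproj; congr f; apply: functional_extensionality => j.
by rewrite ext_nat_concat_r projH_id.
Qed.

End PhiForm.

Theorem lemma3p3 (k : closedFieldType) (d d' n n' : nat)
    (rays : 'I_n -> 'rV[int]_d) (Sig : {set {set 'I_n}})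
    (g : 'I_n' -> 'rV[int]_d') (P : 'M[int]_(d, d')) (r q : nat) :
  simplicial_fan rays Sig ->
  strongly_convex g ->
  (forall i, in_cone g predT (ratv (rays i *m P))) ->
  mSigma_prime_to_char k rays Sig ->
  forall (S : {set 'I_n}) (u : 'rV[int]_d) (s : tens k d r q),
    S \in Sig ->
    (forall i, i \in S -> 0 <= dotZ u (rays i)) ->
    (forall x, List.In x s -> forall j, Hspace rays P S u (x.2.2 j)) ->
    ext_zero (fun _ => True) (imPi P) (wedge s) ->
    forall t : 'I_r -> 'I_n,
      injective t ->
      [set t j | j : 'I_r] \in Sig ->
      [set t j | j : 'I_r] \subset S ->
      (forall j, rays (t j) *m P = 0) ->
      ext_zero (Hspace rays P S u) (imPi P) (Phi rays t u s).
Proof.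
move=> _ _ _ _ S u s _ _ Hs wedge0 t _ _ tS tP f f_alt.
rewrite /Phi big_map.
have [tu|_] := boolP [forall j, dotZ u (rays (t j)) == 0]; last first.
  by rewrite big1 // => x _; rewrite /= !mul0r.
have {}tS j : t j \in S by apply/(subsetP tS)/imsetP; exists j.
have {}tu j : dotZ u (rays (t j)) = 0 by apply/eqP/(forallP tu).
apply: etrans (wedge0 _ (Phi_form_altform tP f_alt)); rewrite /wedge big_map.
elim: s Hs {wedge0} => [|x s IHs] Hs; first by rewrite !big_nil.
rewrite !big_cons IHs => [|y sy]; last exact: (Hs y (or_intror sy)).
rewrite /= Phi_form_concat // => [|j]; last exact: (Hs x (or_introl (erefl x))).
by rewrite mulrA [x.1 * _]mulrC.
Qed.
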